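(* As $n\to\infty$, $ex_{bip}(n,C_6,C_8)=n^3+O(n^{5/2})$.
   Context: $C_k$ denotes the cycle with $k$ vertices. $ex_{bip}(n,C_{6},C_{8})$ denotes the maximum number of subgraphs isomorphic to $C_6$ in a bipartite graph on $n$ vertices that contains no subgraph isomorphic to $C_8$. *)

From mathcomp Require Import all_boot all_order all_algebra.
From mathcomp Require Import reals exp.
Set Implicit Arguments. Unset Strict Implicit. Unset Printing Implicit Defensive.

Definition simple_graph n (E : {set {set 'I_n}}) : bool :=
  [forall e in E, #|e| == 2].

Definition bipartite n (E : {set {set 'I_n}}) : bool :=
  [exists A : {set 'I_n}, [forall e in E, #|e :&: A| == 1]].

Definition cycle_edges k n (f : {ffun 'I_k -> 'I_n}) : {set {set 'I_n}} :=
  [set [set f i; f (ordS i)] | i : 'I_k].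

Definition is_Ck_edges k n (S : {set {set 'I_n}}) : bool :=
  [exists f : {ffun 'I_k -> 'I_n}, injectiveb f && (S == cycle_edges f)].

(* Number of subgraphs of E isomorphic to C_k (a cycle subgraph is
   determined by its edge set). *)
Definition num_Ck k n (E : {set {set 'I_n}}) : nat :=
  #|[set S : {set {set 'I_n}} | (S \subset E) && is_Ck_edges k S]|.

Definition Ck_free k n (E : {set {set 'I_n}}) : bool := num_Ck k E == 0.

Definition ex_bip_C6_C8 (n : nat) : nat :=
  \max_(E : {set {set 'I_n}} | [&& simple_graph E, bipartite E & Ck_free 8 E])
     num_Ck 6 E.

From mathcomp Require Import all_boot all_order all_algebra zify.
From mathcomp Require Import reals exp lra.
Set Implicit Arguments. Unset Strict Implicit. Unset Printing Implicit Defensive.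

(* Write a 6-cycle of a bipartite graph with sides A and B as a0 b1 a2 b3 a4 b5, the a_i
   in A.  Call a vertex of A off the cycle that is adjacent to two of b1, b3, b5 a bridge
   over the cycle, and define bridges in B symmetrically.  A cycle with no bridge in A is
   determined by {b1, b3, b5}, because every vertex of A adjacent to two of them is one of
   the a_i: there are at most |B|^3 such cycles, and at most |A|^3 with no bridge in B.
   If there are bridges on both sides, rotate the cycle so that the bridge in A is
   adjacent to b1 and b5.  Then C8-freeness forces the bridge in B onto a2 and a4, and
   once a0 and b3 are fixed the other vertices have at most 3 * 2 * 2 * 3 choices; this
   gives at most 36 n^2 cycles.  So a C8-free bipartite graph has at most
   |A|^3 + |B|^3 + 36 n^2 <= n^3 + 36 n^2 six-cycles.  Conversely, K_{3,n-3} has no C8,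
   since every edge meets the 3-element side, and it has (n-3)(n-4)(n-5) six-cycles.
   The error term is therefore even O(n^2). *)

Lemma eq_set2 (T : finType) (a b c d : T) :
  ([set a; b] == [set c; d]) = (a == c) && (b == d) || (a == d) && (b == c).
Proof.
apply/eqP/idP => [e|]; last by case/orP => /andP[/eqP-> /eqP->] //; rewrite setUC.
have ac : a \in [set c; d] by rewrite -e set21.
have bc : b \in [set c; d] by rewrite -e set22.
have ca : c \in [set a; b] by rewrite e set21.
have da : d \in [set a; b] by rewrite e set22.
move: ac bc ca da; rewrite !inE.
by do ![case: eqP => //= ?; subst]; rewrite ?eqxx ?orbT.
Qed.

Lemma count_rot (T : Type) (p : pred T) k s : count p (rot k s) = count p s.
Proof. by rewrite /rot count_cat addnC -count_cat cat_take_drop. Qed.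

Lemma all_rot (T : Type) (p : pred T) k s : all p (rot k s) = all p s.
Proof. by rewrite /rot all_cat andbC -all_cat cat_take_drop. Qed.

Lemma card_le_fibers (T U : finType) (f : T -> U) (X : {set T}) k :
  (forall u, #|[set x in X | f x == u]| <= k) -> #|X| <= k * #|U|.
Proof.
move=> fib; rewrite -sum1_card (partition_big f predT) //= mulnC -sum_nat_const.
apply: leq_sum => u _; apply: leq_trans (fib u).
by rewrite sum1dep_card cardsE.
Qed.

Lemma ordS_inord m k : k < m.+1 -> ordS (inord k : 'I_m.+1) = inord (k.+1 %% m.+1).
Proof. by move=> lt_k; apply: val_inj; rewrite /= inordK // inordK // ltn_mod. Qed.

Section Graph.
Variables (n : nat) (E : {set {set 'I_n}}).

Definition adj (u v : 'I_n) := [set u; v] \in E.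

Lemma adjC u v : adj u v = adj v u.
Proof. by rewrite /adj setUC. Qed.

Lemma C8_free_no_cycle (s : seq 'I_n) :
  Ck_free 8 E -> size s = 8 -> cycle adj s -> uniq s -> False.
Proof.
case: s => [|x0 [|x1 [|x2 [|x3 [|x4 [|x5 [|x6 [|x7 []]]]]]]]] // free8 _ cs us.
pose f := [ffun i : 'I_8 => nth x0 [:: x0; x1; x2; x3; x4; x5; x6; x7] i].
have f_inj : injectiveb f.
  by apply/injectiveP => i j; rewrite !ffunE => /eqP; rewrite nth_uniq // => /eqP/val_inj.
have f_sub : cycle_edges f \subset E.
  case/and5P: cs => h01 h12 h23 h34 /and4P[h45 h56 h67 /andP[h70 _]].
  apply/subsetP => _ /imsetP[i _ ->]; rewrite !ffunE.
  by case: i => [[|[|[|[|[|[|[|[|i]]]]]]]] Hi].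
move: free8; rewrite /Ck_free /num_Ck cards_eq0 => /eqP/setP/(_ (cycle_edges f)).
rewrite !inE f_sub /= => /negbT/negP; apply.
by apply/existsP; exists f; rewrite f_inj eqxx.
Qed.

(** * Hexagons *)

Definition hexagon := ('I_n * 'I_n * 'I_n * 'I_n * 'I_n * 'I_n)%type.

Definition hex_seq (t : hexagon) : seq 'I_n :=
  let: (a, b, c, d, e, g) := t in [:: a; b; c; d; e; g].

Definition hex_cycle (t : hexagon) := cycle adj (hex_seq t) && uniq (hex_seq t).

Definition hex_edge_seq (t : hexagon) : seq {set 'I_n} :=
  let: (a, b, c, d, e, g) := t in
  [:: [set a; b]; [set b; c]; [set c; d]; [set d; e]; [set e; g]; [set g; a]].

Definition hex_edges (t : hexagon) : {set {set 'I_n}} := [set S in hex_edge_seq t].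

Definition hex_rot (t : hexagon) : hexagon :=
  let: (a, b, c, d, e, g) := t in (b, c, d, e, g, a).

Definition hex_rev (t : hexagon) : hexagon :=
  let: (a, b, c, d, e, g) := t in (a, g, e, d, c, b).

Lemma hex_cycle_rot t : hex_cycle (hex_rot t) = hex_cycle t.
Proof.
have e : hex_seq (hex_rot t) = rot 1 (hex_seq t) by case: t => [[[[[a b] c] d] e] g].
by rewrite /hex_cycle e rot_cycle rot_uniq.
Qed.

Lemma hex_cycle_rev t : hex_cycle (hex_rev t) = hex_cycle t.
Proof.
have e : hex_seq (hex_rev t) = rot 5 (rev (hex_seq t)) by case: t => [[[[[a b] c] d] e] g].
rewrite /hex_cycle e rot_cycle rot_uniq rev_cycle rev_uniq.
by congr (_ && _); apply: eq_cycle => u v; rewrite adjC.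
Qed.

Lemma hex_edges_rot t : hex_edges (hex_rot t) = hex_edges t.
Proof.
have e : hex_edge_seq (hex_rot t) = rot 1 (hex_edge_seq t) by case: t => [[[[[a b] c] d] e] g].
by apply/setP => S; rewrite !inE e mem_rot.
Qed.

Lemma hex_edges_rev t : hex_edges (hex_rev t) = hex_edges t.
Proof.
have e : hex_edge_seq (hex_rev t) = rev (hex_edge_seq t).
  by case: t => [[[[[a b] c] d] e] g]; congr [:: _; _; _; _; _; _]; apply: setUC.
by apply/setP => S; rewrite !inE e mem_rev.
Qed.

Lemma hex_edges_sub t : (hex_edges t \subset E) = cycle adj (hex_seq t).
Proof.
case: t => [[[[[a b] c] d] e] g]; apply/subsetP/idP => [sub | ].
  by rewrite /= /adj !sub ?inE ?eqxx ?orbT.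
rewrite /= andbT => /and5P[h1 h2 h3 h4 /andP[h5 h6]] S.
by rewrite !inE ?orbF => /or4P[| | |/or3P[| |]] /eqP->.
Qed.

Lemma hex_edges_nbr (a b c d e g y : 'I_n) : uniq [:: a; b; c; d; e; g] ->
  ([set a; y] \in hex_edges (a, b, c, d, e, g)) = (y == b) || (y == g).
Proof.
case/andP; rewrite !inE !negb_or => /and5P[/negPf ab /negPf ac /negPf ad /negPf ae /negPf ag] _.
by rewrite !eq_set2 eqxx ab ac ad ae ag /= ?andbF ?orbF.
Qed.

Lemma cycle_edges6 (f : {ffun 'I_6 -> 'I_n}) : cycle_edges f =
  hex_edges (f (inord 0), f (inord 1), f (inord 2), f (inord 3), f (inord 4), f (inord 5)).
Proof.
apply/setP => S; rewrite !inE; apply/imsetP/idP => [[i _ ->] | ].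
  rewrite -[i]inord_val ordS_inord //.
  by case: i => [[|[|[|[|[|[|i]]]]]] Hi] //=; rewrite ?modnn ?modn_small // eqxx ?orbT.
move=> /or4P[| | |/or3P[| |]] /eqP->; [exists (inord 0) | exists (inord 1)
  | exists (inord 2) | exists (inord 3) | exists (inord 4) | exists (inord 5)];
  by rewrite ?ordS_inord.
Qed.

Lemma C6_subgraphP (S : {set {set 'I_n}}) :
  reflect (exists2 t, hex_cycle t & S = hex_edges t)
          ((S \subset E) && is_Ck_edges 6 S).
Proof.
apply: (iffP idP) => [/andP[SE /existsP[f /andP[/injectiveP f_inj /eqP eS]]] | ].
  subst S; rewrite cycle_edges6 in SE *; eexists; last by [].
  apply/andP; split; first by rewrite -hex_edges_sub.
  rewrite -[hex_seq _]/(map f [:: inord 0; inord 1; inord 2; inord 3; inord 4; inord 5]).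
  by rewrite (map_inj_uniq f_inj) /= !inE -!val_eqE /= !inordK.
case=> [[[[[[a b] c] d] e] g]] /andP[cyc uq] ->.
rewrite hex_edges_sub cyc /=.
pose f := [ffun i : 'I_6 => nth a [:: a; b; c; d; e; g] i].
apply/existsP; exists f; apply/andP; split.
  by apply/injectiveP => i j; rewrite !ffunE => /eqP; rewrite nth_uniq // => /eqP/val_inj.
by rewrite cycle_edges6 !ffunE !inordK.
Qed.

Definition hex_rot2 (t : hexagon) := hex_rot (hex_rot t).

Definition hexA (t : hexagon) : seq 'I_n := let: (a, _, c, _, e, _) := t in [:: a; c; e].
Definition hexB (t : hexagon) : seq 'I_n := let: (_, b, _, d, _, g) := t in [:: b; d; g].

Lemma hexA_rot t : hexA (hex_rot t) = hexB t.
Proof. by case: t => [[[[[a b] c] d] e] g]. Qed.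

Lemma hexB_rot t : hexB (hex_rot t) = rot 1 (hexA t).
Proof. by case: t => [[[[[a b] c] d] e] g]. Qed.

Lemma hexA_rot2 t : hexA (hex_rot2 t) = rot 1 (hexA t).
Proof. by case: t => [[[[[a b] c] d] e] g]. Qed.

Lemma hexB_rot2 t : hexB (hex_rot2 t) = rot 1 (hexB t).
Proof. by case: t => [[[[[a b] c] d] e] g]. Qed.

Lemma hexA_rev t : hexA (hex_rev t) = rot 2 (rev (hexA t)).
Proof. by case: t => [[[[[a b] c] d] e] g]. Qed.

Lemma hexB_rev t : hexB (hex_rev t) = rev (hexB t).
Proof. by case: t => [[[[[a b] c] d] e] g]. Qed.

Lemma hex_cycle_rot2 t : hex_cycle (hex_rot2 t) = hex_cycle t.
Proof. by rewrite /hex_rot2 !hex_cycle_rot. Qed.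

Lemma hex_edges_rot2 t : hex_edges (hex_rot2 t) = hex_edges t.
Proof. by rewrite /hex_rot2 !hex_edges_rot. Qed.

Lemma hex_cycleP a b c d e g : hex_cycle (a, b, c, d, e, g) ->
  [/\ [/\ adj a b, adj b c, adj c d, adj d e & adj e g], adj g a
    & uniq [:: a; b; c; d; e; g]].
Proof. by case/andP; rewrite /= andbT => /and5P[-> -> -> -> /andP[-> ->]] ->. Qed.

Lemma hex_uniq_sides a b c d e g : hex_cycle (a, b, c, d, e, g) ->
  uniq [:: a; c; e] /\ uniq [:: b; d; g].
Proof.
case/hex_cycleP=> _ _; have -> : uniq [:: a; b; c; d; e; g] = uniq ([:: a; c; e] ++ [:: b; d; g]).
  by apply: perm_uniq; apply/permP => p /=; clear; lia.
by rewrite cat_uniq => /and3P[-> _ ->].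
Qed.

Lemma count_adj_gt1 w x y z :
  (1 < count (adj w) [:: x; y; z]) =
  [|| adj w x && adj w y, adj w y && adj w z | adj w z && adj w x].
Proof. by rewrite /=; case: (adj w x); case: (adj w y); case: (adj w z). Qed.

(** * Six-cycles of a bipartite C8-free graph *)

Section Bipartite.
Variable A : {set 'I_n}.
Hypothesis adj_side : forall u v, adj u v -> (u \in A) = (v \notin A).

Lemma adj_sideA u v : adj u v -> u \in A -> v \notin A.
Proof. by move/adj_side->. Qed.

Lemma adj_sideB u v : adj u v -> u \notin A -> v \in A.
Proof. by move/adj_side=> e; rewrite -[v \in A]negbK -e. Qed.

Lemma hex_sides a b c d e g : hex_cycle (a, b, c, d, e, g) -> a \in A ->
  [/\ b \notin A, c \in A, d \notin A, e \in A & g \notin A].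
Proof.
case/hex_cycleP => [[ab bc cd de eg] _ _] aA.
have bA := adj_sideA ab aA; have cA := adj_sideB bc bA; have dA := adj_sideA cd cA.
by have eA := adj_sideB de dA; rewrite bA cA dA eA (adj_sideA eg eA).
Qed.

Definition bridgeless (t : hexagon) :=
  [forall w in A, (w \notin hexA t) ==> (count (adj w) (hexB t) <= 1)].

Lemma bridgeless_mem t w :
  bridgeless t -> w \in A -> 1 < count (adj w) (hexB t) -> w \in hexA t.
Proof.
move=> /forallP/(_ w) bl wA; apply: contraLR => wn.
by move: bl; rewrite wA wn -leqNgt.
Qed.

Lemma bridgeless_rot2 t : bridgeless (hex_rot2 t) = bridgeless t.
Proof.
by apply: eq_forallb => w; rewrite hexA_rot2 hexB_rot2 mem_rot count_rot.
Qed.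

Lemma bridgeless_rev t : bridgeless (hex_rev t) = bridgeless t.
Proof.
by apply: eq_forallb => w; rewrite hexA_rev hexB_rev mem_rot mem_rev count_rev.
Qed.

(* Among the traversals of a hexagon keeping the A-vertices at even positions, exactly one
   is sorted. *)
Definition hex_sorted (t : hexagon) := sorted (fun u v : 'I_n => u < v) (hexA t).

Definition sorted_bridgeless :=
  [set t | [&& hex_cycle t, all (mem A) (hexA t), hex_sorted t & bridgeless t]].

Lemma hex_sort t : hex_cycle t -> all (mem A) (hexA t) -> bridgeless t ->
  exists2 t', t' \in sorted_bridgeless & hex_edges t' = hex_edges t.
Proof.
move=> hc hA hb.
pose Q s := [&& hex_cycle s, all (mem A) (hexA s), bridgeless s & hex_edges s == hex_edges t].
have Q_rot2 s : Q (hex_rot2 s) = Q s.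
  by rewrite /Q hex_cycle_rot2 hexA_rot2 all_rot bridgeless_rot2 hex_edges_rot2.
have Q_rev s : Q (hex_rev s) = Q s.
  by rewrite /Q hex_cycle_rev hexA_rev all_rot all_rev bridgeless_rev hex_edges_rev.
pose orbit := [:: t; hex_rot2 t; hex_rot2 (hex_rot2 t); hex_rev t;
                 hex_rot2 (hex_rev t); hex_rot2 (hex_rot2 (hex_rev t))].
have orbitQ s : s \in orbit -> Q s.
  rewrite !inE => /or4P[| | |/or3P[| |]] /eqP->;
  by rewrite ?Q_rot2 ?Q_rev ?Q_rot2 /Q hc hA hb eqxx.
have /hasP[t' /orbitQ/and4P[hc' hA' hb' /eqP <-] t'_sorted] : has hex_sorted orbit.
  rewrite /orbit; move: hc; case: (t) => [[[[[a b] c] d] e] g] /hex_cycleP[_ _].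
  rewrite /hex_sorted /= !inE -!val_eqE /=; lia.
by exists t'; rewrite // inE hc' hA' t'_sorted.
Qed.

Definition hexB_triple (t : hexagon) := let: (_, b, _, d, _, g) := t in (b, d, g).

Lemma sorted_bridgeless_inj : {in sorted_bridgeless &, injective hexB_triple}.
Proof.
have lt_trans : transitive (fun u v : 'I_n => u < v) by move=> ? ? ?; apply: ltn_trans.
move=> [[[[[a b] c] d] e] g] [[[[[a' b'] c'] d'] e'] g'].
rewrite !inE => /and4P[_ _ sorted_t bl] /and4P[hc' hA' sorted_t' _] [e1 e2 e3].
subst b' d' g'.
have sub : {subset hexA (a', b, c', d, e', g) <= hexA (a, b, c, d, e, g)}.
  case/hex_cycleP: hc' => [[ab bc cd de eg] ga _] x xA'.
  apply: bridgeless_mem => //; first exact: (allP hA').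
  move: xA'; rewrite count_adj_gt1 !inE => /or3P[]/eqP->.
  - by rewrite ab (adjC a' g) ga !orbT.
  - by rewrite (adjC c' b) bc cd.
  - by rewrite (adjC e' d) de eg orbT.
have uniq_t' := sorted_uniq lt_trans ltnn sorted_t'.
have [_ eqA] := uniq_min_size uniq_t' sub (leqnn 3).
by case: (irr_sorted_eq lt_trans ltnn sorted_t' sorted_t eqA) => -> -> ->.
Qed.

Lemma card_sorted_bridgeless : #|sorted_bridgeless| <= #|~: A| ^ 3.
Proof.
rewrite -(card_in_imset sorted_bridgeless_inj).
apply: (@leq_trans #|setX (setX (~: A) (~: A)) (~: A)|).
  apply/subset_leq_card/subsetP => _ /imsetP[[[[[[a b] c] d] e] g] + ->].
  rewrite inE => /and4P[hc /and3P[aA _ _] _ _].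
  by have [bA _ dA _ gA] := hex_sides hc aA; rewrite !inE bA dA gA.
by rewrite !cardsX !expnS expn0 muln1 mulnA.
Qed.

Hypothesis C8_free : Ck_free 8 E.

Lemma bipartite_no_C8 a1 b1 a2 b2 a3 b3 a4 b4 : a1 \in A ->
  uniq [:: a1; a2; a3; a4] -> uniq [:: b1; b2; b3; b4] ->
  cycle adj [:: a1; b1; a2; b2; a3; b3; a4; b4] -> False.
Proof.
move=> a1A ua ub cyc.
suff : uniq [:: a1; b1; a2; b2; a3; b3; a4; b4] by exact: C8_free_no_cycle C8_free _ cyc.
have -> : uniq [:: a1; b1; a2; b2; a3; b3; a4; b4] =
          uniq ([:: a1; a2; a3; a4] ++ [:: b1; b2; b3; b4]).
  by apply: perm_uniq; apply/permP => p /=; clear; lia.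
move: cyc; rewrite [cycle _ _]/= => /and5P[h1 h2 h3 h4 /and4P[h5 h6 h7 _]].
have b1A := adj_sideA h1 a1A; have a2A := adj_sideB h2 b1A.
have b2A := adj_sideA h3 a2A; have a3A := adj_sideB h4 b2A.
have b3A := adj_sideA h5 a3A; have a4A := adj_sideB h6 b3A.
have b4A := adj_sideA h7 a4A.
have /allP inA : all (mem A) [:: a1; a2; a3; a4] by rewrite /= a1A a2A a3A a4A.
have /allP notinA : all (fun x => x \notin A) [:: b1; b2; b3; b4] by rewrite /= b1A b2A b3A b4A.
rewrite cat_uniq ua ub andbT.
by apply/hasPn => x /notinA; apply: contra => /inA.
Qed.

Lemma bridged_common_nbr y b1 x b3 z b5 w v :
  hex_cycle (y, b1, x, b3, z, b5) -> w \in A -> w \notin [:: y; x; z] -> adj w b1 -> adj w b5 ->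
  adj v y -> adj v x || adj v z -> v \in [:: b1; b3; b5].
Proof.
move=> hc wA wn wb1 wb5 vy vxz; apply/idPn => vn.
wlog vx : x z b1 b5 hc wn wb1 wb5 vxz vn / adj v x.
  move=> hwlog; case/orP: (vxz) => [vx | vz]; first exact: (hwlog x z b1 b5).
  apply: (hwlog z x b5 b1) => //.
  - by rewrite -[(y, _, _, _, _, _)]/(hex_rev (y, b1, x, b3, z, b5)) hex_cycle_rev.
  - by rewrite -[[:: y; z; x]]/(rot 2 (rev [:: y; x; z])) mem_rot mem_rev.
  - by rewrite orbC.
  - by rewrite -[[:: b5; b3; b1]]/(rev [:: b1; b3; b5]) mem_rev.
have [uA uB] := hex_uniq_sides hc.
case/hex_cycleP: hc => [[yb1 b1x xb3 b3z zb5] b5y _].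
apply: (@bipartite_no_C8 w b1 y v x b3 z b5 wA); first by rewrite cons_uniq wn.
  by move: uB vn; rewrite /= !inE -!val_eqE; clear; lia.
by rewrite /= wb1 (adjC b1) yb1 (adjC y) vy vx xb3 b3z zb5 (adjC b5) wb5.
Qed.

Lemma bridged_path y b1 x b3 z b5 w v p q :
  hex_cycle (y, b1, x, b3, z, b5) -> y \in A ->
  w \in A -> w \notin [:: y; x; z] -> adj w b1 -> adj w b5 ->
  v \notin [:: b1; b3; b5] -> adj v x -> adj v z ->
  adj y p -> adj p q -> adj q b3 -> q != y -> p != b3 -> q \in [:: x; z].
Proof.
move=> hc yA wA wn wb1 wb5 vn vx vz yp pq qb3 qy pb3; apply/idPn => qn.
have pv : p != v.
  apply: contraNneq vn => pv; subst p.
  by apply: (bridged_common_nbr hc wA wn wb1 wb5); rewrite ?vx // adjC.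
have [uA uB] := hex_uniq_sides hc.
case/hex_cycleP: hc => [[yb1 b1x xb3 b3z zb5] b5y _].
have [pb1|pb1] := eqVneq p b1; first subst p.
  apply: (@bipartite_no_C8 y b1 q b3 x v z b5 yA).
  - by move: uA qn qy; rewrite /= !inE -!val_eqE; clear; lia.
  - by move: uB vn; rewrite /= !inE -!val_eqE; clear; lia.
  by rewrite /= yb1 pq qb3 (adjC b3) xb3 (adjC x) vx vz zb5 b5y.
apply: (@bipartite_no_C8 y p q b3 z v x b1 yA).
- by move: uA qn qy; rewrite /= !inE -!val_eqE; clear; lia.
- by move: uB vn pv pb1 pb3; rewrite /= !inE -!val_eqE; clear; lia.
by rewrite /= yp pq qb3 b3z (adjC z) vz vx (adjC x) b1x (adjC b1) yb1.
Qed.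

Definition doubly_bridged := [set t : hexagon | let: (y, b1, x, b3, z, b5) := t in
  [&& hex_cycle t, y \in A,
      [exists w in A, [&& w \notin [:: y; x; z], adj w b1 & adj w b5]]
    & [exists v, [&& v \notin [:: b1; b3; b5], adj v x & adj v z]]]].

Lemma doubly_bridgedI y b1 x b3 z b5 w v :
  hex_cycle (y, b1, x, b3, z, b5) -> y \in A ->
  w \in A -> w \notin [:: y; x; z] -> adj w b1 -> adj w b5 ->
  v \notin [:: b1; b3; b5] -> 1 < count (adj v) [:: y; x; z] ->
  (y, b1, x, b3, z, b5) \in doubly_bridged.
Proof.
move=> hc yA wA wn wb1 wb5 vn; rewrite count_adj_gt1.
have common u : adj v y -> adj v u -> u \in [:: x; z] -> False.
  move=> vy vu uxz; case/negP: vn.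
  apply: (bridged_common_nbr hc wA wn wb1 wb5 vy).
  by move: uxz; rewrite !inE => /orP[]/eqP<-; rewrite vu ?orbT.
case/or3P=> [/andP[vy vx] | /andP[vx vz] | /andP[vz vy]].
- by case: (common x vy vx); rewrite !inE eqxx.
- rewrite inE hc yA /=; apply/andP; split; apply/existsP.
    by exists w; rewrite wA wn wb1 wb5.
  by exists v; rewrite vn vx vz.
- by case: (common z vy vz); rewrite !inE eqxx orbT.
Qed.

Definition hex_pivot (t : hexagon) := let: (y, _, _, b3, _, _) := t in (y, b3).

(* Given one member (y, b1, x, b3, z, b5) of the fiber over (y, b3), every member has its
   other A-vertices in {x, z} and its B-vertices in {b1, b3, b5}. *)
Lemma doubly_bridged_fiber k : #|[set t in doubly_bridged | hex_pivot t == k]| <= 36.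
Proof.
set F := [set t in _ | _].
have [-> | [t0]] := set_0Vmem F; first by rewrite cards0.
rewrite !inE; case: t0 => [[[[[y b1] x] b3] z] b5] /=.
case/andP=> /and4P[hc yA /exists_inP[w wA /and3P[wn wb1 wb5]] /existsP[v /and3P[vn vx vz]]].
move/eqP=> def_k.
pose code (t : hexagon) := let: (_, b, c, _, e, g) := t in (b, c, e, g).
have code_inj : {in F &, injective code}.
  move=> [[[[[a b] c] d] e] g] [[[[[a' b'] c'] d'] e'] g']; rewrite !inE /=.
  move=> /andP[_ /eqP ek] /andP[_ /eqP ek'] [-> -> -> ->].
  by move: ek; rewrite -ek' => -[-> ->].
rewrite -(card_in_imset code_inj).
set SB := [set u in [:: b1; b3; b5]]; set SA := [set u in [:: x; z]].
apply: (@leq_trans #|setX (setX (setX SB SA) SA) SB|).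
  apply/subset_leq_card/subsetP => _ /imsetP[[[[[[a b] c] d] e] g] + ->].
  rewrite !inE /= => /andP[/and4P[hc' _ _ _] /eqP]; rewrite -def_k => -[ea ed].
  subst a d; have [[yb bc cb3 b3e eg] gy _] := hex_cycleP hc'.
  have [cy ey bb3 gb3] : [/\ c != y, e != y, b != b3 & g != b3].
    have [] := hex_uniq_sides hc'; rewrite /= !inE -!val_eqE /= => uA' uB'.
    by split; clear -uA' uB'; lia.
  have path := bridged_path hc yA wA wn wb1 wb5 vn vx vz.
  have cA : c \in [:: x; z] by apply: path yb bc cb3 cy bb3.
  have eA : e \in [:: x; z].
    by apply: (path g e) => //; rewrite adjC.
  have common := bridged_common_nbr hc wA wn wb1 wb5.
  have bB : b \in [:: b1; b3; b5].
    apply: common; first by rewrite adjC.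
    by move: cA; rewrite !inE => /orP[]/eqP<-; rewrite bc ?orbT.
  have gB : g \in [:: b1; b3; b5].
    apply: common => //.
    by move: eA; rewrite !inE => /orP[]/eqP<-; rewrite (adjC g e) eg ?orbT.
  by move: bB cA eA gB; rewrite !inE => -> -> -> ->.
rewrite !cardsX !cardsE.
have sizeB := card_size [:: b1; b3; b5]; have sizeA := card_size [:: x; z].
exact: leq_mul (leq_mul (leq_mul sizeB sizeA) sizeA) sizeB.
Qed.

Lemma card_doubly_bridged : #|doubly_bridged| <= 36 * n ^ 2.
Proof.
apply: leq_trans (card_le_fibers doubly_bridged_fiber) _.
by rewrite card_prod card_ord mulnn.
Qed.

Lemma doubly_bridged_orbit t w v : hex_cycle t -> all (mem A) (hexA t) ->
  w \in A -> w \notin hexA t -> 1 < count (adj w) (hexB t) ->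
  v \notin hexB t -> 1 < count (adj v) (hexA t) ->
  exists2 t', t' \in doubly_bridged & hex_edges t' = hex_edges t.
Proof.
move=> hc hA wA wn wB vn vA.
pose R s := [&& hex_cycle s, all (mem A) (hexA s), w \notin hexA s, v \notin hexB s,
                1 < count (adj v) (hexA s) & hex_edges s == hex_edges t].
have R_rot2 s : R (hex_rot2 s) = R s.
  by rewrite /R hex_cycle_rot2 hexA_rot2 hexB_rot2 all_rot !mem_rot count_rot hex_edges_rot2.
pose orbit := [:: t; hex_rot2 t; hex_rot2 (hex_rot2 t)].
have orbitR s : s \in orbit -> R s.
  by rewrite !inE => /or3P[]/eqP->; rewrite ?R_rot2 /R hc hA wn vn vA eqxx.
have /hasP[s /orbitR/and5P[hc' hA' wn' vn' /andP[vA' /eqP <-]]] :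
    has (fun s => let: (_, b1, _, _, _, b5) := s in adj w b1 && adj w b5) orbit.
  move: wB; rewrite /orbit; case: (t) => [[[[[a b] c] d] e] g] /=.
  by rewrite count_adj_gt1 => /or3P[]/andP[-> ->]; rewrite ?orbT.
move: hc' hA' wn' vn' vA'; case: s => [[[[[y b1] x] b3] z] b5] hc' /and3P[yA _ _].
move=> wn' vn' vA' /andP[wb1 wb5]; exists (y, b1, x, b3, z, b5) => //.
exact: doubly_bridgedI hc' yA wA wn' wb1 wb5 vn' vA'.
Qed.

End Bipartite.

Section Classification.
Variable A : {set 'I_n}.
Hypothesis adj_side : forall u v, adj u v -> (u \in A) = (v \notin A).
Hypothesis C8_free : Ck_free 8 E.

Lemma adj_side_setC u v : adj u v -> (u \in ~: A) = (v \notin ~: A).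
Proof. by move=> uv; rewrite !inE (adj_side uv). Qed.

Lemma hex_classify t : hex_cycle t ->
  exists2 t', t' \in sorted_bridgeless A :|: sorted_bridgeless (~: A) :|: doubly_bridged A
            & hex_edges t' = hex_edges t.
Proof.
move=> hc.
have [t1 [hc1 hA1 e1]] :
    exists t1, [/\ hex_cycle t1, all (mem A) (hexA t1) & hex_edges t1 = hex_edges t].
  case: t hc => [[[[[a b] c] d] e] g] hc.
  have [aA | aA] := boolP (a \in A).
    by exists (a, b, c, d, e, g); have [] := hex_sides adj_side hc aA; rewrite /= aA => _ -> _ ->.
  have hc' : hex_cycle (b, c, d, e, g, a) by rewrite -hex_cycle_rot in hc.
  have [[ab _ _ _ _] _ _] := hex_cycleP hc.
  have bA : b \in A := adj_sideB adj_side ab aA.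
  exists (hex_rot (a, b, c, d, e, g)); rewrite hex_edges_rot; split => //.
  by have [] := hex_sides adj_side hc' bA; rewrite /= bA => _ -> _ ->.
rewrite -e1; have [bl | /forallPn[w]] := boolP (bridgeless A t1).
  have [t' t'_in <-] := hex_sort hc1 hA1 bl.
  by exists t'; rewrite // !in_setU t'_in.
rewrite !negb_imply -ltnNge => /and3P[wA wn wB].
have hc1' : hex_cycle (hex_rot t1) by rewrite hex_cycle_rot.
have hA1' : all (mem (~: A)) (hexA (hex_rot t1)).
  rewrite hexA_rot; move: hc1 hA1; case: (t1) => [[[[[a b] c] d] e] g] hc1 /and3P[aA _ _].
  by have [] := hex_sides adj_side hc1 aA; rewrite /= !inE => -> _ -> _ ->.
have [bl | /forallPn[v]] := boolP (bridgeless (~: A) (hex_rot t1)).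
  have [t' t'_in e'] := hex_sort hc1' hA1' bl.
  by exists t'; rewrite ?in_setU ?t'_in ?orbT // e' hex_edges_rot.
rewrite !negb_imply -ltnNge hexA_rot hexB_rot count_rot => /and3P[_ vn vA].
have [t' t'_in <-] := doubly_bridged_orbit adj_side C8_free hc1 hA1 wA wn wB vn vA.
by exists t'; rewrite // !in_setU t'_in orbT.
Qed.

Lemma num_C6_le : num_Ck 6 E <= #|~: A| ^ 3 + #|A| ^ 3 + 36 * n ^ 2.
Proof.
have cover : [set S : {set {set 'I_n}} | (S \subset E) && is_Ck_edges 6 S] \subset
    hex_edges @: (sorted_bridgeless A :|: sorted_bridgeless (~: A) :|: doubly_bridged A).
  apply/subsetP => S; rewrite inE => /C6_subgraphP[t hc ->].
  have [t' t'_in <-] := hex_classify hc.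
  exact: imset_f.
apply: leq_trans (subset_leq_card cover) _; apply: leq_trans (leq_imset_card _ _) _.
apply: leq_trans (leq_card_setU _ _) _; apply: leq_add; last exact: card_doubly_bridged.
apply: leq_trans (leq_card_setU _ _) _; apply: leq_add; first exact: card_sorted_bridgeless.
by rewrite -{2}(setCK A); apply: card_sorted_bridgeless adj_side_setC.
Qed.

End Classification.
End Graph.

Lemma bipartite_adj_side n (E : {set {set 'I_n}}) (A : {set 'I_n}) :
  simple_graph E -> [forall e in E, #|e :&: A| == 1] ->
  forall u v, adj E u v -> (u \in A) = (v \notin A).
Proof.
move=> /forallP simple /forallP side u v uv.
have := side [set u; v]; have := simple [set u; v].
rewrite [_ \in E]uv /= cards2 eqSS eqb1 => u_neq_v.
case uA: (u \in A); case vA: (v \in A) => //=.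
  suff -> : [set u; v] :&: A = [set u; v] by rewrite cards2 u_neq_v.
  by apply/setIidPl/subsetP => x; rewrite !inE => /orP[]/eqP->.
suff -> : [set u; v] :&: A = set0 by rewrite cards0.
by apply/setP => x; rewrite !inE; apply/negbTE/negP => /andP[/orP[]/eqP->]; rewrite ?uA ?vA.
Qed.

Lemma ex_bip_C6_C8_le n : ex_bip_C6_C8 n <= n ^ 3 + 36 * n ^ 2.
Proof.
apply/bigmax_leqP => E /and3P[simple /existsP[A /(bipartite_adj_side simple) side] free8].
apply: leq_trans (num_C6_le side free8) _; rewrite leq_add2r.
have := cardsC A; rewrite card_ord; move: #|A| #|~: A| => a b <-.
by rewrite !expnS expn0 !muln1; nia.
Qed.

(** * The lower bound: K_{3,m} *)

Lemma Ck_free_small_cover k n (E : {set {set 'I_n}}) (C : {set 'I_n}) :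
  {in E, forall e, e :&: C != set0} -> #|C| < k -> Ck_free k.*2 E.
Proof.
move=> cover small; rewrite /Ck_free /num_Ck cards_eq0; apply/eqP/setP => S; rewrite !inE.
apply/negbTE/negP => /andP[SE /existsP[f /andP[/injectiveP f_inj /eqP eS]]]; subst S.
(* The edges {f (2j), f (2j+1)} of the cycle are pairwise disjoint, so covering them takes
   k distinct vertices. *)
have ev_lt (j : 'I_k) : j.*2 < k.*2 by rewrite ltn_double.
have od_lt (j : 'I_k) : j.*2.+1 < k.*2 by rewrite -doubleS leq_double.
pose ev j := Ordinal (ev_lt j); pose od j := Ordinal (od_lt j).
have ordS_ev j : ordS (ev j) = od j by apply: val_inj; rewrite /= modn_small.
pose c j := if f (ev j) \in C then f (ev j) else f (od j).
have cC j : c j \in C.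
  have /set0Pn[x] : [set f (ev j); f (ordS (ev j))] :&: C != set0.
    by apply/cover/(subsetP SE)/imset_f.
  by rewrite ordS_ev /c !inE => /andP[/orP[]/eqP-> xC]; case: ifP => //; rewrite xC.
have c_inj : injective c.
  move=> j1 j2; rewrite /c; do 2!case: ifP => _; move/f_inj/(congr1 val) => /= e12;
  by apply: val_inj => /=; lia.
suff : k <= #|C| by rewrite leqNgt small.
have <- : #|c @: [set: 'I_k]| = k by rewrite card_imset // cardsT card_ord.
by apply/subset_leq_card/subsetP => _ /imsetP[j _ ->].
Qed.

Section CompleteBipartite.
Variable m : nat.
Local Notation n := (3 + m).

Definition K3m_edges : {set {set 'I_n}} := [set [set lshift m i; rshift 3 j] | i : 'I_3, j : 'I_m].

Definition K3m_side : {set 'I_n} := [set lshift m i | i : 'I_3].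

Lemma rshift_K3m_side j : rshift 3 j \notin K3m_side.
Proof. by apply/imsetP => -[i _ /eqP]; rewrite eq_rlshift. Qed.

Lemma K3m_simple : simple_graph K3m_edges.
Proof. by apply/forall_inP => _ /imset2P[i j _ _ ->]; rewrite cards2 eq_lrshift. Qed.

Lemma K3m_bipartite : bipartite K3m_edges.
Proof.
apply/existsP; exists K3m_side; apply/forall_inP => _ /imset2P[i j _ _ ->].
suff -> : [set lshift m i; rshift 3 j] :&: K3m_side = [set lshift m i] by rewrite cards1.
apply/setP => x; rewrite !inE; have [->|_] /= := eqVneq x (lshift m i).
  by rewrite imset_f.
by have [->|_] := eqVneq x (rshift 3 j); rewrite ?(negPf (rshift_K3m_side j)).
Qed.

Lemma K3m_C8_free : Ck_free 8 K3m_edges.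
Proof.
apply: (@Ck_free_small_cover 4 _ _ K3m_side).
  move=> _ /imset2P[i j _ _ ->]; apply/set0Pn; exists (lshift m i).
  by rewrite !inE eqxx imset_f.
by rewrite card_imset ?card_ord //; exact: lshift_inj.
Qed.

Lemma K3m_adj i j : adj K3m_edges (lshift m i) (rshift 3 j).
Proof. exact: imset2_f. Qed.

Definition K3m_hex (f : {ffun 'I_3 -> 'I_m}) : hexagon n :=
  (lshift m (inord 0), rshift 3 (f (inord 0)), lshift m (inord 1),
   rshift 3 (f (inord 1)), lshift m (inord 2), rshift 3 (f (inord 2))).

Lemma K3m_hex_cycle (f : {ffun 'I_3 -> 'I_m}) : injective f -> hex_cycle K3m_edges (K3m_hex f).
Proof.
move=> f_inj; apply/andP; split.
  by rewrite /= !K3m_adj !(adjC _ (rshift 3 _)) !K3m_adj.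
have f01 : f (inord 0) != f (inord 1) by rewrite (inj_eq f_inj) -val_eqE /= !inordK.
have f02 : f (inord 0) != f (inord 2) by rewrite (inj_eq f_inj) -val_eqE /= !inordK.
have f12 : f (inord 1) != f (inord 2) by rewrite (inj_eq f_inj) -val_eqE /= !inordK.
move: f01 f02 f12; rewrite /= !inE -!val_eqE /= !inordK //; lia.
Qed.

Lemma K3m_hex_common (h : {ffun 'I_3 -> 'I_m}) x : injective h ->
  let E := hex_edges (K3m_hex h) in
  let l k := lshift m (inord k) in
  [/\ ([set l 0; rshift 3 x] \in E) && ([set l 1; rshift 3 x] \in E) = (x == h (inord 0)),
      ([set l 1; rshift 3 x] \in E) && ([set l 2; rshift 3 x] \in E) = (x == h (inord 1))
    & ([set l 2; rshift 3 x] \in E) && ([set l 0; rshift 3 x] \in E) = (x == h (inord 2))].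
Proof.
move=> h_inj E l; have hc := K3m_hex_cycle h_inj.
have n0 y : ([set l 0; y] \in E) = (y == rshift 3 (h (inord 0))) || (y == rshift 3 (h (inord 2))).
  by apply: hex_edges_nbr; case/andP: hc.
have n1 y : ([set l 1; y] \in E) = (y == rshift 3 (h (inord 1))) || (y == rshift 3 (h (inord 0))).
  rewrite /E -hex_edges_rot2; apply: hex_edges_nbr.
  by move: hc; rewrite -hex_cycle_rot2 => /andP[].
have n2 y : ([set l 2; y] \in E) = (y == rshift 3 (h (inord 2))) || (y == rshift 3 (h (inord 1))).
  rewrite /E -hex_edges_rot2 -hex_edges_rot2; apply: hex_edges_nbr.
  by move: hc; rewrite -hex_cycle_rot2 -hex_cycle_rot2 => /andP[].
have h_neq i j : i < 3 -> j < 3 -> i != j -> h (inord i) != h (inord j).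
  by move=> ? ? ?; rewrite (inj_eq h_inj) -val_eqE /= !inordK.
have sel (a b c : 'I_m) : b != c -> ((x == a) || (x == b)) && ((x == c) || (x == a)) = (x == a).
  move=> bc; case: (x =P a) => [_|_]; rewrite ?orbT //=.
  by case: (x =P b) => [->|_]; rewrite ?(negPf bc) ?orbF.
by rewrite n0 n1 n2 !eq_rshift !sel ?h_neq.
Qed.

Lemma K3m_hex_edges_inj :
  {in [set f : {ffun 'I_3 -> 'I_m} | injectiveb f] &, injective (fun f => hex_edges (K3m_hex f))}.
Proof.
move=> f g; rewrite !inE => /injectiveP f_inj /injectiveP g_inj /= e.
apply/ffunP => i; apply/eqP; rewrite -[i]inord_val.
have := K3m_hex_common _ f_inj; have := K3m_hex_common _ g_inj; rewrite /= -e.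
case: i => [[|[|[|i]]] Hi] // g_com f_com.
- by have [<- _ _] := g_com (f (inord 0)); have [-> _ _] := f_com (f (inord 0)).
- by have [_ <- _] := g_com (f (inord 1)); have [_ -> _] := f_com (f (inord 1)).
- by have [_ _ <-] := g_com (f (inord 2)); have [_ _ ->] := f_com (f (inord 2)).
Qed.

Lemma K3m_num_C6 : m ^_ 3 <= num_Ck 6 K3m_edges.
Proof.
have <- : #|[set f : {ffun 'I_3 -> 'I_m} | injectiveb f]| = m ^_ 3.
  by rewrite card_inj_ffuns !card_ord.
rewrite -(card_in_imset K3m_hex_edges_inj); apply/subset_leq_card/subsetP.
move=> _ /imsetP[f /[!inE] /injectiveP f_inj ->]; apply/C6_subgraphP.
by exists (K3m_hex f); first exact: K3m_hex_cycle.
Qed.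

Lemma ex_bip_C6_C8_ge : m ^_ 3 <= ex_bip_C6_C8 n.
Proof.
apply: leq_trans K3m_num_C6 (leq_bigmax_cond _ _).
by rewrite K3m_simple K3m_bipartite K3m_C8_free.
Qed.
End CompleteBipartite.

Lemma ex_bip_C6_C8_bounds n : 3 <= n ->
  ex_bip_C6_C8 n <= n ^ 3 + 36 * n ^ 2 /\ n ^ 3 <= ex_bip_C6_C8 n + 36 * n ^ 2.
Proof.
move=> n_ge3; split; first exact: ex_bip_C6_C8_le.
have := ex_bip_C6_C8_ge (n - 3); rewrite subnKC //; move: (ex_bip_C6_C8 n) => e.
rewrite !ffactnSr ffactn0 !expnS expn0; nia.
Qed.

Import Order.TTheory GRing.Theory Num.Theory.
Local Open Scope ring_scope.

Theorem theorem10 (R : realType) :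
  exists C : R, exists N : nat, forall n : nat, (N <= n)%N ->
    `| (ex_bip_C6_C8 n)%:R - (n%:R : R) ^+ 3 | <= C * ((n%:R : R) `^ (5%:R / 2%:R)).
Proof.
exists 36, 3%N => n n_ge3.
have [le_ex ge_ex] := ex_bip_C6_C8_bounds n_ge3.
have le_exR : (ex_bip_C6_C8 n)%:R <= n%:R ^+ 3 + 36 * n%:R ^+ 2 :> R.
  by rewrite -!natrX -natrM -natrD ler_nat.
have ge_exR : n%:R ^+ 3 <= (ex_bip_C6_C8 n)%:R + 36 * n%:R ^+ 2 :> R.
  by rewrite -!natrX -natrM -natrD ler_nat.
have n_ge1 : 1 <= n%:R :> R by rewrite ler1n; apply: leq_trans n_ge3.
apply: (@le_trans _ _ (36 * n%:R ^+ 2)); first by rewrite ler_distl; apply/andP; split; lra.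
rewrite ler_wpM2l // -powR_mulrn ?(le_trans _ n_ge1) //.
by apply: ler_powR => //; lra.
Qed.
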